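(* Let $X\subset A^+$ be a finite set which is the minimal generating set of the submonoid $X^*$. For every trim automaton $\mathcal{B}=(Q,i,i)$ recognizing $X^*$ with multiplicities, there is a sharp reduction from the flower automaton of $X$ onto $\mathcal{B}$.
   Context: Automata $(Q,i,t)$: finite state set, initial state $i$, terminal state $t$, edges $p\xrightarrow{a}q$ with $a\in A$ (a set of triples). The behaviour $|\mathcal{A}|$ assigns to $w\in A^*$ the number of paths from $i$ to $t$ labeled $w$; $\mathcal{A}$ recognizes $X^*$ with multiplicities if $|\mathcal{A}|=\underline{X}^*$, i.e. for every $w$ the number of such paths equals the number of factorizations of $w$ into words of $X$. An automaton is trim if every state lies on some path from the initial state to the terminal state. The flower automaton of $X$ has states $\{(u,v)\in A^+\times A^+\mid uv\in X\}\cup\{\omega\}$, $\omega=(1,1)$ initial and terminal, and edges $(u,av)\xrightarrow{a}(ua,v)$ for $uav\in X$, $u,v\ne1$; $\omega\xrightarrow{a}(a,v)$ for $av\in X$, $v\ne1$; $(u,a)\xrightarrow{a}\omega$ for $ua\in X$, $u\neq 1$; $\omega\xrightarrow{a}\omega$ for $a\in X$. A reduction from $(P,i,t)$ onto $(Q,j,u)$ is a surjective map $\rho:P\to Q$ with $\rho(i)=j,\rho(t)=u$ such that for all $q,q'\in Q$, $w\in A^*$, there is a path $q\xrightarrow{w}q'$ in the second automaton iff there is a path $p\xrightarrow{w}p'$ in the first with $\rho(p)=q,\rho(p')=q'$. It is sharp if $\rho^{-1}(j)=\{i\}$ and $\rho^{-1}(u)=\{t\}$. *)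

From mathcomp Require Import all_boot.
Set Implicit Arguments. Unset Strict Implicit. Unset Printing Implicit Defensive.

Section Words.
Variable A : finType.

Definition in_star (X : seq (seq A)) (w : seq A) : Prop :=
  exists xs : seq (seq A), all (fun x => x \in X) xs /\ flatten xs = w.

Definition minimal_generating_set (X : seq (seq A)) : Prop :=
  forall w : seq A,
    w \in X <->
    (w <> [::] /\ in_star X w /\
     ~ (exists u v : seq A, u <> [::] /\ v <> [::] /\
          in_star X u /\ in_star X v /\ w = u ++ v)).

Fixpoint is_path (S : Type) (e : S -> A -> S -> Prop) (p : S) (w : seq A) (p' : S)
  : Prop :=
  match w with
  | [::] => p = p'
  | a :: w' => exists q, e p a q /\ is_path e q w' p'
  end.

Fixpoint npaths (Q : finType) (E : Q -> A -> Q -> bool) (p : Q) (w : seq A) (p' : Q)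
  : nat :=
  match w with
  | [::] => nat_of_bool (p == p')
  | a :: w' => \sum_(q : Q) nat_of_bool (E p a q) * npaths E q w' p'
  end.

Definition edgeP (Q : Type) (E : Q -> A -> Q -> bool) : Q -> A -> Q -> Prop :=
  fun p a q => E p a q.

(** (Q,i,t) recognizes X^* with multiplicities: for every word w the number of
    paths i --w--> t equals the number of factorizations of w into words of X. *)
Definition recognizes_star_mult (Q : finType) (E : Q -> A -> Q -> bool) (i t : Q)
  (X : seq (seq A)) : Prop :=
  forall w : seq A, exists s : seq (seq (seq A)),
    uniq s /\
    (forall xs, xs \in s <-> (all (fun x => x \in X) xs /\ flatten xs = w)) /\
    npaths E i w t = size s.

Definition trim (S : Type) (e : S -> A -> S -> Prop) (i t : S) : Prop :=
  forall q : S, exists u v : seq A, is_path e i u q /\ is_path e q v t.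

Definition reduction (P Q : Type) (eP : P -> A -> P -> Prop) (i t : P)
  (eQ : Q -> A -> Q -> Prop) (j u : Q) (rho : P -> Q) : Prop :=
  (forall q : Q, exists p : P, rho p = q) /\
  rho i = j /\ rho t = u /\
  (forall (q q' : Q) (w : seq A),
     is_path eQ q w q' <->
     exists p p' : P, rho p = q /\ rho p' = q' /\ is_path eP p w p').

Definition sharp_reduction (P Q : Type) (eP : P -> A -> P -> Prop) (i t : P)
  (eQ : Q -> A -> Q -> Prop) (j u : Q) (rho : P -> Q) : Prop :=
  reduction eP i t eQ j u rho /\
  (forall p : P, rho p = j -> p = i) /\
  (forall p : P, rho p = u -> p = t).

Definition flower_pred (X : seq (seq A)) (p : seq A * seq A) : bool :=
  (p == ([::], [::])) || [&& p.1 != [::], p.2 != [::] & p.1 ++ p.2 \in X].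

Definition flower_state (X : seq (seq A)) := {p : seq A * seq A | flower_pred X p}.

Lemma flower_omega_proof (X : seq (seq A)) : flower_pred X ([::], [::]).
Proof. by rewrite /flower_pred eqxx. Qed.

Definition flower_omega (X : seq (seq A)) : flower_state X :=
  exist _ ([::], [::]) (flower_omega_proof X).

Definition flower_edge_pairs (X : seq (seq A)) (p : seq A * seq A) (a : A)
  (p' : seq A * seq A) : Prop :=
  (p.1 <> [::] /\ p'.2 <> [::] /\ p.2 = a :: p'.2 /\ p'.1 = rcons p.1 a /\
     p.1 ++ a :: p'.2 \in X) \/
  (p = ([::], [::]) /\ p'.1 = [:: a] /\ p'.2 <> [::] /\ a :: p'.2 \in X) \/
  (p.1 <> [::] /\ p.2 = [:: a] /\ p' = ([::], [::]) /\ rcons p.1 a \in X) \/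
  (p = ([::], [::]) /\ p' = ([::], [::]) /\ [:: a] \in X).

Definition flower_edge (X : seq (seq A)) (p : flower_state X) (a : A)
  (p' : flower_state X) : Prop :=
  flower_edge_pairs X (proj1_sig p) a (proj1_sig p').

End Words.

From mathcomp Require Import all_boot.
Set Implicit Arguments. Unset Strict Implicit. Unset Printing Implicit Defensive.

(* Paths of B are handled as runs: the explicit sequence of visited states;
   [npaths] counts runs.  For every x in X the recognition property yields a
   loop i --x--> i; we fix one, the canonical run of x.  Minimality of X
   forces it never to visit i strictly inside x: otherwise x would split into
   two nonempty words of the submonoid.  The reduction maps the flower state
   (u,v) to the state reached after reading u along the canonical run of uv.
   - every flower edge is mapped to an edge of B (rho_edge), so flower paths
     are mapped to paths of B;
   - concatenating canonical runs maps factorizations of w over X injectively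
     to loops i --w--> i, because these runs visit i exactly at the factor
     boundaries; since B counts loops by factorizations, every loop at i is
     such a concatenation (factorization_run_onto);
   - a path q --w--> q' of B, extended by trimness to a loop at i, therefore
     lifts to a flower path (lift_path).  Surjectivity is the case w = 1, and
     sharpness is the no-return property of canonical runs. *)

Section Runs.
Variables (A : finType) (Q : Type) (E : Q -> A -> Q -> bool).

Fixpoint run (p : Q) (w : seq A) (s : seq Q) : bool :=
  match w, s with
  | [::], [::] => true
  | a :: w', q :: s' => E p a q && run q w' s'
  | _, _ => false
  end.

Lemma size_run p w s : run p w s -> size s = size w.
Proof. by elim: w p s => [|a w IH] p [|q s] //= /andP[_ /IH ->]. Qed.

Lemma is_pathP p w p' :
  is_path (edgeP E) p w p' <-> exists2 s, run p w s & last p s = p'.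
Proof.
elim: w p => [|a w IH] p /=.
  by split=> [->|[[|q s] //= _ ->]]; first by exists [::].
split=> [[q [Hq /IH [s Hs <-]]]|[[|q s] //= /andP[Hq Hs] Hl]].
  by exists (q :: s); rewrite //= Hq Hs.
by exists q; split => //; apply/IH; exists s.
Qed.

Lemma run_take p w s k : run p w s -> run p (take k w) (take k s).
Proof. by elim: w p s k => [|a w IH] p [|q s] [|k] //= /andP[-> /IH]; apply. Qed.

Lemma run_drop p w s k :
  run p w s -> run (last p (take k s)) (drop k w) (drop k s).
Proof. by elim: w p s k => [|a w IH] p [|q s] [|k] //= /andP[_ /IH]; apply. Qed.

Lemma run_cat p u v s t :
  run p u s -> run (last p s) v t -> run p (u ++ v) (s ++ t).
Proof. by elim: u p s => [|a u IH] p [|q s] //= /andP[-> /IH]; apply. Qed.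

Lemma run_step p w s k a0 : run p w s -> k < size w ->
  E (last p (take k s)) (nth a0 w k) (last p (take k.+1 s)).
Proof.
elim: w p s k => [|a w IH] p [|q s] [|k] //= /andP[Eq Hs] Hk.
  by rewrite take0.
exact: IH.
Qed.

End Runs.

Section Counting.
Variables (A Q : finType) (E : Q -> A -> Q -> bool).

Fixpoint seqs_of_size (n : nat) : seq (seq Q) :=
  if n is n'.+1 then [seq q :: s | q <- enum Q, s <- seqs_of_size n'] else [:: [::]].

Lemma mem_seqs_of_size n s : (s \in seqs_of_size n) = (size s == n).
Proof.
elim: n s => [|n IH] [|q s] //=.
  by apply/negbTE/allpairsP => [[[x y] []]].
rewrite eqSS -IH; apply/allpairsP/idP => [[[x y] [_ /= Hy [? ?]]]|Hs]; first by subst.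
by exists (q, s); rewrite mem_enum.
Qed.

Definition run_to (p : Q) (w : seq A) (p' : Q) : pred (seq Q) :=
  fun s => run E p w s && (last p s == p').

Lemma npaths_count p w p' :
  npaths E p w p' = count (run_to p w p') (seqs_of_size (size w)).
Proof.
elim: w p => [|a w IH] p /=; first by rewrite /run_to /= addn0.
rewrite count_flatten sumnE !big_map [index_enum Q]unlock.
apply: eq_bigr => q _; rewrite count_map IH /preim /run_to /=.
case: (E p a q); first by rewrite mul1n.
by rewrite mul0n; elim: (seqs_of_size (size w)).
Qed.

Lemma run_toP p w p' s :
  reflect (run E p w s /\ last p s = p') (run_to p w p' s).
Proof. by apply: (iffP andP) => -[-> /eqP]. Qed.

Lemma mem_runs p w p' s :
  run_to p w p' s -> s \in filter (run_to p w p') (seqs_of_size (size w)).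
Proof.
move=> Hs; rewrite mem_filter Hs mem_seqs_of_size.
by case/run_toP: Hs => Hr _; rewrite (size_run Hr) eqxx.
Qed.

Lemma npaths_gt0 p w p' :
  0 < npaths E p w p' <-> exists2 s, run E p w s & last p s = p'.
Proof.
rewrite npaths_count -has_count; split=> [/hasP[s _ /run_toP[]]|[s Hs Hl]].
  by exists s.
have Hto : run_to p w p' s by apply/run_toP.
by apply/hasP; exists s => //; move: (mem_runs Hto); rewrite mem_filter => /andP[].
Qed.

Lemma runs_pigeonhole p w p' (L : seq (seq Q)) s :
  uniq L -> {subset L <= run_to p w p'} -> npaths E p w p' <= size L ->
  run_to p w p' s -> s \in L.
Proof.
move=> uL HL Hn Hs.
have sub : {subset L <= filter (run_to p w p') (seqs_of_size (size w))}.
  by move=> t /HL; apply: mem_runs.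
have enough : size (filter (run_to p w p') (seqs_of_size (size w))) <= size L.
  by rewrite size_filter -npaths_count.
by have [_ ->] := uniq_min_size uL sub enough; apply: mem_runs.
Qed.

Definition choose_loop (i : Q) (w : seq A) : seq Q :=
  let L := seqs_of_size (size w) in nth [::] L (find (run_to i w i) L).

Lemma choose_loopP i w : 0 < npaths E i w i ->
  run E i w (choose_loop i w) /\ last i (choose_loop i w) = i.
Proof. by rewrite npaths_count -has_count => /(nth_find [::]) /run_toP. Qed.

End Counting.

Section Flower.
Variables (A Q : finType) (E : Q -> A -> Q -> bool) (i : Q) (X : seq (seq A)).
Hypothesis X_nonempty : forall x : seq A, x \in X -> x != [::].
Hypothesis X_minimal : minimal_generating_set X.
Hypothesis B_recognizes : recognizes_star_mult E i i X.

Local Notation over_X xs := (all (fun x => x \in X) xs).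
Local Notation crun x := (choose_loop E i x).

Lemma factor_loop x : x \in X -> 0 < npaths E i x i.
Proof.
move=> Hx; have [s [_ [Hs ->]]] := B_recognizes x.
have : [:: x] \in s by apply/Hs; rewrite /= Hx cats0.
by case: s {Hs}.
Qed.

Lemma loop_in_star w : 0 < npaths E i w i -> in_star X w.
Proof.
have [[|xs s] [_ [Hs ->]]] := B_recognizes w => // _.
by have [H1 H2] := (Hs xs).1 (mem_head _ _); exists xs.
Qed.

Lemma X_size_gt0 x : x \in X -> 0 < size x.
Proof. by move=> Hx; rewrite lt0n size_eq0 X_nonempty. Qed.

Lemma canon_runP x : x \in X -> run E i x (crun x) /\ last i (crun x) = i.
Proof. by move/factor_loop/choose_loopP. Qed.

(* A loop at i reading a word of X does not pass through i in between:
   otherwise both parts would be nonempty words of X^*, contradicting the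
   minimality of X. *)
Lemma loop_no_return x R k : x \in X -> run E i x R -> last i R = i ->
  0 < k < size x -> last i (take k R) != i.
Proof.
move=> Hx HR HL /andP[k0 kx]; apply/negP => /eqP Hi.
have [_ [_ []]] := (X_minimal x).1 Hx.
exists (take k x), (drop k x); split.
  by move/(f_equal size); rewrite size_take kx => E0; rewrite E0 in k0.
split.
  by move/(f_equal size); rewrite size_drop /=; move/eqP; rewrite subn_eq0 leqNgt kx.
split.
  by apply/loop_in_star/npaths_gt0; exists (take k R) => //; apply: run_take.
split; last by rewrite cat_take_drop.
apply/loop_in_star/npaths_gt0; exists (drop k R); rewrite -{1}Hi ?run_drop //.
by rewrite -last_cat cat_take_drop.
Qed.

(* Hence the first visit of i along the canonical run of x is its last state. *)
Lemma index_canon_run x t : x \in X -> index i (crun x ++ t) = (size x).-1.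
Proof.
move=> Hx; have [HR HL] := canon_runP Hx.
have sR := size_run HR.
have sx := X_size_gt0 Hx.
move: HR HL sR; case/lastP: (crun x) => [|b c] HR HL sR; first by rewrite -sR in sx.
rewrite last_rcons in HL; subst c.
have nib : i \notin b.
  apply/negP => ib.
  have := loop_no_return (k := (index i b).+1) Hx HR (last_rcons i b i).
  rewrite -sR size_rcons ltnS ltnS index_mem ib => /(_ isT).
  rewrite (take_nth i); last by rewrite size_rcons ltnS ltnW // index_mem.
  by rewrite last_rcons nth_rcons index_mem ib nth_index // eqxx.
rewrite index_cat mem_rcons mem_head -cats1 index_cat (negPf nib) /= eqxx addn0.
by rewrite -sR size_rcons.
Qed.

Definition factorization_run (xs : seq (seq A)) : seq Q :=
  flatten (map (choose_loop E i) xs).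

Lemma factorization_runP xs : over_X xs ->
  run E i (flatten xs) (factorization_run xs) /\ last i (factorization_run xs) = i.
Proof.
elim: xs => [|x xs IH] //= /andP[Hx /IH [H1 H2]].
have [R1 R2] := canon_runP Hx.
split; last by rewrite last_cat R2.
by apply: run_cat => //; rewrite R2.
Qed.

(* Distinct factorizations of the same word give distinct runs: the run
   determines the length of the first factor (first return to i). *)
Lemma factorization_run_inj xs ys : over_X xs -> over_X ys ->
  flatten xs = flatten ys -> factorization_run xs = factorization_run ys -> xs = ys.
Proof.
elim: xs ys => [|x xs IH] [|y ys] //=.
- move=> _ /andP[Hy _] /esym/(f_equal size); rewrite size_cat /=.
  by move=> /eqP; rewrite addn_eq0 size_eq0 (negPf (X_nonempty Hy)).
- move=> /andP[Hx _] _ /(f_equal size); rewrite size_cat /=.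
  by move=> /eqP; rewrite addn_eq0 size_eq0 (negPf (X_nonempty Hx)).
move=> /andP[Hx Hxs] /andP[Hy Hys] Hf Hr.
have := f_equal (index i) Hr; rewrite !index_canon_run // => Hs.
have exy : size x = size y.
  by rewrite -(prednK (X_size_gt0 Hx)) -(prednK (X_size_gt0 Hy)) Hs.
have xy : x = y by rewrite -(take_size_cat (flatten xs) exy) Hf take_size_cat.
subst y; congr (_ :: _); apply: IH => //.
  by have := f_equal (drop (size x)) Hf; rewrite !drop_size_cat.
by have := f_equal (drop (size (crun x))) Hr; rewrite !drop_size_cat.
Qed.

(* Counting: every loop at i is the run of some factorization. *)
Lemma factorization_run_onto w s : run_to E i w i s ->
  exists2 xs, over_X xs /\ flatten xs = w & s = factorization_run xs.
Proof.
move=> Hs; have [F [uF [HF HN]]] := B_recognizes w.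
have inj : {in F &, injective factorization_run}.
  move=> xs ys /HF [Ax Fx] /HF [Ay Fy]; apply: factorization_run_inj => //.
  by rewrite Fx Fy.
have runsF : {subset map factorization_run F <= run_to E i w i}.
  move=> t /mapP [xs /HF [Ax <-] ->]; apply/run_toP; exact: factorization_runP.
have uL : uniq (map factorization_run F) by rewrite map_inj_in_uniq.
have := runs_pigeonhole uL runsF.
rewrite size_map HN => /(_ s (leqnn _) Hs) /mapP [xs /HF Hxs ->].
by exists xs.
Qed.

Definition word_pos (x : seq A) (k : nat) : seq A * seq A :=
  if (k == 0) || (size x <= k) then ([::], [::]) else (take k x, drop k x).

Lemma word_pos_flower x k : x \in X -> flower_pred X (word_pos x k).
Proof.
move=> Hx; rewrite /word_pos /flower_pred; case: ifP => [_|/norP[k0]].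
  by rewrite eqxx.
rewrite -ltnNge => kx; apply/orP; right; rewrite cat_take_drop Hx andbT.
rewrite -!size_eq0 size_take kx size_drop subn_eq0 -ltnNge kx andbT.
by rewrite k0.
Qed.

Lemma word_pos_step x k a0 : x \in X -> k < size x ->
  flower_edge_pairs X (word_pos x k) (nth a0 x k) (word_pos x k.+1).
Proof.
move=> Hx kx; rewrite /word_pos /= (leqNgt (size x) k) kx orbF.
have takeS : take k.+1 x = rcons (take k x) (nth a0 x k) by rewrite (take_nth a0).
have dropS : drop k x = nth a0 x k :: drop k.+1 x by rewrite (drop_nth a0).
have Hxk : take k x ++ nth a0 x k :: drop k.+1 x \in X by rewrite -dropS cat_take_drop.
have take0_ne : (k == 0) = false -> take k x <> [::].
  by move=> k0 /(f_equal size); rewrite size_take kx => /eqP; rewrite k0.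
case: (ltnP k.+1 (size x)) => k1x.
  have drop1_ne : drop k.+1 x <> [::].
    by move/(f_equal size)/eqP; rewrite size_drop subn_eq0 leqNgt k1x.
  case: eqP => [k0|/eqP/negbTE k0].
    subst k; right; left; split => //; rewrite take0 /= in takeS Hxk.
    by rewrite takeS.
  by left; rewrite /= takeS dropS; split; [exact: take0_ne|].
have ex : size x = k.+1 by apply/eqP; rewrite eqn_leq kx k1x.
have drop1_nil : drop k.+1 x = [::] by rewrite -ex drop_size.
rewrite drop1_nil cats1 in Hxk.
case: eqP => [k0|/eqP/negbTE k0].
  by subst k; right; right; right; rewrite take0 in Hxk.
by right; right; left; rewrite /= dropS drop1_nil; split; [exact: take0_ne|].
Qed.

Lemma flower_edge_reads p a p' : flower_edge_pairs X p a p' ->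
  exists x k, [/\ x \in X, k < size x, p = word_pos x k, p' = word_pos x k.+1
                 & a = nth a x k].
Proof.
have nonnil (s : seq A) : s <> [::] -> (size s == 0) = false.
  by move=> /eqP; rewrite size_eq0 => /negbTE.
case: p p' => [u v] [u' v']; rewrite /flower_edge_pairs /=.
case=> [[Hu [Hv [-> [-> Hx]]]]|[[[-> ->] [-> [Hv Hx]]]|
        [[Hu [-> [[-> ->] Hx]]]|[[-> ->] [[-> ->] Hx]]]]].
- exists (u ++ a :: v'), (size u); split => //.
  + by rewrite size_cat /= addnS ltnS leq_addr.
  + rewrite /word_pos nonnil // size_cat /= addnS ltnNge leq_addr /=.
    by rewrite take_size_cat // drop_size_cat.
  + rewrite /word_pos /= size_cat /= addnS ltnS -{2}(addn0 (size u)) leq_add2l.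
    have -> : u ++ a :: v' = rcons u a ++ v' by rewrite -cats1 -catA.
    by rewrite leqn0 nonnil // take_size_cat ?drop_size_cat // size_rcons.
  + by rewrite nth_cat ltnn subnn.
- exists (a :: v'), 0; split => //.
  by rewrite /word_pos /= ltnS leqn0 nonnil // take0 drop0.
- exists (rcons u a), (size u); split => //; rewrite ?size_rcons //.
  + rewrite /word_pos nonnil // size_rcons ltnn.
    by rewrite -cats1 take_size_cat ?drop_size_cat.
  + by rewrite /word_pos size_rcons leqnn orbT.
  + by rewrite nth_rcons ltnn eqxx.
- by exists [:: a], 0.
Qed.

Definition rho_pair (p : seq A * seq A) : Q :=
  last i (take (size p.1) (crun (p.1 ++ p.2))).

Lemma rho_word_pos x k : x \in X -> rho_pair (word_pos x k) = last i (take k (crun x)).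
Proof.
move=> Hx; rewrite /rho_pair /word_pos; case: ifP => [/orP[/eqP ->|kx]|/norP[_]].
- by rewrite /= !take0.
- have [HR HL] := canon_runP Hx.
  by rewrite /= take0 take_oversize ?(size_run HR) // HL.
- by rewrite -ltnNge cat_take_drop => kx; rewrite size_take kx.
Qed.

Lemma rho_edge p a p' : flower_edge_pairs X p a p' -> E (rho_pair p) a (rho_pair p').
Proof.
move=> /flower_edge_reads [x [k [Hx kx -> -> ->]]].
have [HR _] := canon_runP Hx.
by rewrite !rho_word_pos //; apply: run_step HR kx.
Qed.

Fixpoint fact_pos (xs : seq (seq A)) (k : nat) : seq A * seq A :=
  if xs is x :: xs' then
    (if k < size x then word_pos x k else fact_pos xs' (k - size x))
  else ([::], [::]).

Lemma fact_pos0 xs : fact_pos xs 0 = ([::], [::]).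
Proof. by elim: xs => //= x xs IH; case: ifP; rewrite ?sub0n. Qed.

Lemma fact_pos_flower xs k : over_X xs -> flower_pred X (fact_pos xs k).
Proof.
elim: xs k => [|x xs IH] k /=; first by rewrite /flower_pred eqxx.
by case/andP=> Hx Hxs; case: ifP => _; [apply: word_pos_flower | apply: IH].
Qed.

Lemma fact_pos_step xs k a0 : over_X xs -> k < size (flatten xs) ->
  flower_edge_pairs X (fact_pos xs k) (nth a0 (flatten xs) k) (fact_pos xs k.+1).
Proof.
elim: xs k => [|x xs IH] k //= /andP[Hx Hxs]; rewrite size_cat nth_cat.
case: (ltnP k (size x)) => kx => [_|].
  have -> : (if k.+1 < size x then word_pos x k.+1 else fact_pos xs (k.+1 - size x))
            = word_pos x k.+1.
    case: ltnP => // k1x; have /eqP -> : k.+1 - size x == 0 by rewrite subn_eq0.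
    by rewrite fact_pos0 /word_pos k1x orbT.
  exact: word_pos_step.
rewrite [k.+1 < _]ltnNge (leqW kx) subSn //= => k_lt; apply: IH => //.
by rewrite -(ltn_add2l (size x)) subnKC.
Qed.

Lemma factorization_run_state xs k : over_X xs ->
  last i (take k (factorization_run xs)) = rho_pair (fact_pos xs k).
Proof.
elim: xs k => [|x xs IH] k /=; first by rewrite /factorization_run /rho_pair /= take0.
case/andP=> Hx Hxs; have [HR HL] := canon_runP Hx.
rewrite /factorization_run /= take_cat (size_run HR).
by case: ifP => _; rewrite ?rho_word_pos // last_cat HL IH.
Qed.

Definition fact_state (xs : seq (seq A)) (k : nat) : flower_state X :=
  insubd (flower_omega X) (fact_pos xs k).

Lemma val_fact_state xs k : over_X xs -> val (fact_state xs k) = fact_pos xs k.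
Proof. by move=> Hxs; rewrite /fact_state insubdK //; apply: fact_pos_flower. Qed.

Lemma fact_state_path xs k n : over_X xs -> k + n <= size (flatten xs) ->
  is_path (flower_edge (X:=X)) (fact_state xs k) (take n (drop k (flatten xs)))
          (fact_state xs (k + n)).
Proof.
move=> Hxs; elim: n k => [|n IH] k Hk; first by rewrite take0 addn0.
have kz : k < size (flatten xs) by rewrite (leq_trans _ Hk) // -addSnnS leq_addr.
case Ez: (flatten xs) => [|a0 z']; first by rewrite Ez in kz.
rewrite -Ez (drop_nth a0 kz) /=; exists (fact_state xs k.+1); split.
  by rewrite /flower_edge !val_fact_state //; apply: fact_pos_step.
by rewrite -addSnnS; apply: IH; rewrite addSnnS.
Qed.

Definition rho (p : flower_state X) : Q := rho_pair (val p).

Lemma rho_omega : rho (flower_omega X) = i.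
Proof. by rewrite /rho /rho_pair /= take0. Qed.

Lemma rho_path p w p' : is_path (flower_edge (X:=X)) p w p' ->
  is_path (edgeP E) (rho p) w (rho p').
Proof.
elim: w p => [|a w IH] p /=; first by move=> ->.
by move=> [p1 [He Hp]]; exists (rho p1); split; [apply: rho_edge | apply: IH].
Qed.

(* A path of B lying on a loop at i lifts to the flower automaton: the loop
   is the run of a factorization, whose positions give the lift. *)
Lemma lift_path q q' u w v :
  is_path (edgeP E) i u q -> is_path (edgeP E) q w q' ->
  is_path (edgeP E) q' v i ->
  exists p p' : flower_state X,
    rho p = q /\ rho p' = q' /\ is_path (flower_edge (X:=X)) p w p'.
Proof.
move=> /is_pathP[s1 H1 L1] /is_pathP[s2 H2 L2] /is_pathP[s3 H3 L3].
have loop : run_to E i (u ++ w ++ v) i (s1 ++ s2 ++ s3).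
  apply/run_toP; split; last by rewrite !last_cat L1 L2.
  by apply: run_cat H1 _; rewrite L1; apply: run_cat H2 _; rewrite L2.
have [xs [Ax Fx] Es] := factorization_run_onto loop.
have s1u := size_run H1; have s2w := size_run H2.
exists (fact_state xs (size u)), (fact_state xs (size u + size w)).
rewrite /rho !val_fact_state // -!factorization_run_state // -Es.
split; first by rewrite take_size_cat.
split; first by rewrite catA take_size_cat ?size_cat ?s1u ?s2w // last_cat L1.
have := fact_state_path (k := size u) (n := size w) Ax.
by rewrite Fx drop_size_cat // take_size_cat // !size_cat addnA leq_addr; apply.
Qed.

(* Sharpness: only omega is sent to i, by the no-return property. *)
Lemma rho_sharp p : rho p = i -> p = flower_omega X.
Proof.
case: p => [[u v] Hp]; rewrite /rho /rho_pair /= => Hr; apply: val_inj => /=.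
case/orP: Hp => [/eqP //|/and3P [Hu Hv Hx]].
have [R1 R2] := canon_runP Hx.
have := loop_no_return (k := size u) Hx R1 R2.
rewrite size_cat lt0n size_eq0 Hu -{1}(addn0 (size u)) ltn_add2l lt0n size_eq0 Hv.
by move=> /(_ isT); rewrite Hr eqxx.
Qed.

End Flower.

(* Trimness places every path of B on a loop at i, so [lift_path] applies. *)
Theorem mainTheorem3 (A : finType) (X : seq (seq A))
  (Q : finType) (E : Q -> A -> Q -> bool) (i : Q) :
  (forall x : seq A, x \in X -> x != [::]) ->
  minimal_generating_set X ->
  trim (edgeP E) i i ->
  recognizes_star_mult E i i X ->
  exists rho : flower_state X -> Q,
    sharp_reduction (flower_edge (X:=X)) (flower_omega X) (flower_omega X)
                    (edgeP E) i i rho.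
Proof.
move=> NE MIN TRIM REC; exists (rho E i (X:=X)).
have lift q q' w : is_path (edgeP E) q w q' -> exists p p' : flower_state X,
    rho E i (X:=X) p = q /\ rho E i (X:=X) p' = q' /\
    is_path (flower_edge (X:=X)) p w p'.
  move=> Hw; have [u [_ [Hu _]]] := TRIM q; have [_ [v [_ Hv]]] := TRIM q'.
  exact: (lift_path NE MIN REC Hu Hw Hv).
have sharp := rho_sharp MIN REC.
split; last by split.
split; [|split; [exact: rho_omega|split; [exact: rho_omega|]]].
  by move=> q; have [p [_ [<- _]]] := lift q q [::] (erefl q); exists p.
move=> q q' w; split; first exact: lift.
by move=> [p [p' [<- [<- Hp]]]]; apply: rho_path.
Qed.
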